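(* Let $\Omega_D := \{x \in \mathbb{R}^2 : |x| \le 1\}$ and $\Omega_S := [-1,1]\times[0,2\pi)$. Let $\mathcal{E} \in C^2(\mathbb{R})$ satisfy $\mathcal{E}(x) = \exp(-x)$ for all $x \ge 0$, with $|\mathcal{E}|$, $|\mathcal{E}'|$ and $|\mathcal{E}''|$ bounded on $\mathbb{R}$. For $w \in L_1(\mathbb{R})$ define $$F(f)(s,\theta) := \int_{\mathbb{R}} w(r-s)\, \mathcal{E}\Big(\tfrac{1}{2}(Rf)(r,\theta)\Big)\, dr, \qquad (s,\theta) \in \Omega_S,$$ for $f \in L_2(\Omega_D)$, where $R$ is the Radon transform. Then $F : L_2(\Omega_D) \to L_2(\Omega_S)$ is well-defined, i.e. $F(f) \in L_2(\Omega_S)$ for every $f \in L_2(\Omega_D)$.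
   Context: Functions $f \in L_2(\Omega_D)$ are extended by zero outside $\Omega_D$. The Radon transform is $(Rf)(s,\theta) = \int_{\mathbb{R}} f(s\,u(\theta) + \sigma\, u(\theta)^\perp)\, d\sigma$ for $s \in \mathbb{R}$, $\theta \in [0,2\pi)$, where $u(\theta) = (\cos\theta, \sin\theta)^T$ and $u(\theta)^\perp$ is the unit vector perpendicular to it. $R$ is a bounded linear operator from $L_2(\Omega_D)$ to $L_2(\mathbb{R}\times[0,2\pi))$ (and to $L_2(\Omega_S)$), and $(Rf)(s,\theta) = 0$ for $|s|>1$. *)

From HB Require Import structures.
From mathcomp Require Import all_boot all_order all_algebra.
From mathcomp Require Import all_classical all_reals all_analysis.
Unset Printing Implicit Defensive.
Import Order.TTheory GRing.Theory Num.Theory.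
Import numFieldNormedType.Exports.
Local Open Scope classical_set_scope.
Local Open Scope ring_scope.

Definition OmegaD (R : realType) : set (R * R) :=
  [set x | x.1 ^+ 2 + x.2 ^+ 2 <= 1].

Definition OmegaS (R : realType) : set (R * R) :=
  [set p | -1 <= p.1 <= 1 /\ 0 <= p.2 < 2 * pi].

Definition leb2 (R : realType) :=
  ((@lebesgue_measure R) \x (@lebesgue_measure R))%E.

Definition extD (R : realType) (f : R * R -> R) : R * R -> R :=
  fun x => if `[< OmegaD R x >] then f x else 0.

(* Radon transform: (Rf)(s,theta) = int_R f(s u(theta) + sigma u(theta)^perp) dsigma,
   u(theta) = (cos theta, sin theta), u(theta)^perp = (- sin theta, cos theta). *)
Definition radon (R : realType) (f : R * R -> R) (s theta : R) : R :=
  Rintegral (@lebesgue_measure R) setT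
    (fun sigma => extD R f (s * cos theta - sigma * sin theta,
                          s * sin theta + sigma * cos theta)).

Definition Fop (R : realType) (w E : R -> R) (f : R * R -> R) (p : R * R) : R :=
  Rintegral (@lebesgue_measure R) setT
    (fun r => w (r - p.1) * E ((radon R f r p.2) / 2)).

From HB Require Import structures.
From mathcomp Require Import all_boot all_order all_algebra.
From mathcomp Require Import all_classical all_reals all_analysis.
From mathcomp Require Import measurable_realfun.
Import Order.TTheory GRing.Theory Num.Theory.
Import numFieldNormedType.Exports.
Local Open Scope classical_set_scope.
Local Open Scope ring_scope.

(* The Radon transform and F(f) are parametric Lebesgue integrals of jointly
   measurable functions, hence measurable by Tonelli.  Since |E| <= M and
   Lebesgue measure is translation invariant, |F(f)| <= M ||w||_1 everywhere,
   and a bounded measurable function is square integrable on the bounded set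
   Omega_S. *)

Section measurable_Rintegral_section.
Context {d1 d2} {T1 : measurableType d1} {T2 : measurableType d2} {R : realType}.
Variable m2 : {sigma_finite_measure set T2 -> \bar R}.

Lemma measurable_fun_Rintegral_section (g : T1 * T2 -> R) :
  measurable_fun setT g -> measurable_fun setT (fun x => \int[m2]_y g (x, y)).
Proof.
move=> mg; have mgE : measurable_fun setT (EFin \o g) by exact/measurable_EFinP.
apply: (measurableT_comp (fine_measurable measurableT)) => /=.
under eq_fun => x do rewrite integralE.
apply: emeasurable_funB.
- have := measurable_fun_fubini_tonelli_F (m2:=m2) _
    (measurable_funepos mgE) (funepos_ge0 _).
  apply: eq_measurable_fun => x _.
  by apply: eq_integral => y _; rewrite !funeposE.
- have := measurable_fun_fubini_tonelli_F (m2:=m2) _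
    (measurable_funeneg mgE) (funeneg_ge0 _).
  apply: eq_measurable_fun => x _.
  by apply: eq_integral => y _; rewrite !funenegE.
Qed.

End measurable_Rintegral_section.

Section lebesgue_translation.
Context {R : realType}.
Local Notation mu := (@lebesgue_measure R).

Lemma measurable_addr (a : R) : measurable_fun setT (fun x : R => x + a).
Proof. exact: measurable_funD. Qed.

Lemma lebesgue_measure_addr (a : R) (A : set R) : measurable A ->
  mu ((fun x => x + a) @^-1` A) = mu A.
Proof.
(* The measure structure on the pushforward carries the measurability of the
   map as a hypothesis, which shows up as an extra premise below. *)
move=> mA; rewrite (@lebesgue_measure_unique R (@pushforward _ _
  (measurableTypeR R) (measurableTypeR R) R mu (fun x => x + a)) _ A mA) //.
  exact: measurable_addr.
move=> ? X /ocitvP [->//|[[b c] /= bc ->]]; rewrite /pushforward.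
have -> : (fun x => x + a) @^-1` `]b, c]%classic = `]b - a, c - a]%classic.
  by apply/seteqP; split => x /=; rewrite !in_itv /= ltrBlDr lerBrDr.
rewrite !lebesgue_measure_itv /= !lte_fin ltrD2r.
by case: ifP => // _; rewrite -!EFinD opprB addrA subrK.
Qed.

Lemma ge0_integral_addr (a : R) (h : R -> \bar R) : measurable_fun setT h ->
  (forall x, 0 <= h x)%E -> (\int[mu]_x h (x + a)%R = \int[mu]_x h x)%E.
Proof.
move=> mh h0.
have := @ge0_integral_pushforward _ _ (measurableTypeR R) (measurableTypeR R) R
  _ (measurable_addr a) mu setT h measurableT mh (fun y _ => h0 y).
rewrite preimage_setT => <-.
apply: eq_measure_integral; first exact: measurable_addr.
by move=> ? A mA _; exact: lebesgue_measure_addr.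
Qed.

Lemma normr_Rintegral_translate_mul_le (w g : R -> R) (M a : R) :
  mu.-integrable setT (EFin \o w) -> measurable_fun setT g ->
  (forall r, `|g r| <= M) ->
  `|\int[mu]_r (w (r - a) * g r)| <= M * \int[mu]_r `|w r|.
Proof.
move=> /integrableP[/measurable_EFinP mw wfin] mg gM.
have M0 : 0 <= M := le_trans (normr_ge0 _) (gM 0).
have mwa : measurable_fun setT (fun r : R => w (r - a)).
  exact: measurableT_comp mw (measurable_addr (- a)).
have mnwa : measurable_fun setT (fun r : R => `|w (r - a)|).
  exact: measurableT_comp (@normr_measurable _ _) mwa.
have absw : (\int[mu]_r (`|w r|)%:E)%E = (\int[mu]_r `|w r|)%:E.
  by rewrite fineK // ge0_fin_numE ?integral_ge0.
have bound : (`|\int[mu]_r (w (r - a) * g r)%:E| <= (M * \int[mu]_r `|w r|)%:E)%E.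
  apply: le_trans (le_abse_integral _ measurableT _) _.
    exact/measurable_EFinP/measurable_funM.
  under eq_integral do rewrite abse_EFin.
  apply: (@le_trans _ _ (\int[mu]_r (M%:E * (`|w (r - a)|)%:E))%E).
    apply: ge0_le_integral => //.
    - exact/measurable_EFinP/(measurableT_comp (@normr_measurable _ _))/measurable_funM.
    - exact/measurable_EFinP/measurable_funM.
    - by move=> r _; rewrite lee_fin normrM mulrC ler_wpM2r.
  rewrite ge0_integralZl //; last exact/measurable_EFinP.
  by rewrite (ge0_integral_addr (- a) (fun r => (`|w r|)%:E)) ?absw //;
    exact/measurable_EFinP/measurableT_comp.
move: bound; rewrite /Rintegral.
by case: (\int[mu]_r (w (r - a) * g r)%:E)%E => [r||] //=; rewrite lee_fin.
Qed.

End lebesgue_translation.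

Lemma integral_sqr_normr_bounded_lty d (T : measurableType d) (R : realType)
    (mu : {measure set T -> \bar R}) (D : set T) (g : T -> R) (C : R) :
  measurable D -> (mu D < +oo)%E -> measurable_fun D g ->
  (forall x, D x -> `|g x| <= C) ->
  (\int[mu]_(x in D) (`|g x| ^+ 2)%:E < +oo)%E.
Proof.
move=> mD Dfin mg gC.
apply: (@le_lt_trans _ _ (\int[mu]_(x in D) (C ^+ 2)%:E)%E).
  apply: ge0_le_integral => //.
  - exact/measurable_EFinP/measurable_funX/measurableT_comp.
  - by move=> x Dx; rewrite lee_fin !expr2 ler_pM ?gC.
by rewrite integral_cst // lte_mul_pinfty // lee_fin sqr_ge0.
Qed.

Section radon_operator.
Context {R : realType}.
Local Notation mu := (@lebesgue_measure R).

Lemma measurable_OmegaD : measurable (OmegaD R).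
Proof.
have mq : measurable_fun setT (fun x : R * R => x.1 ^+ 2 + x.2 ^+ 2).
  by apply: measurable_funD; apply: measurable_funX.
have := mq measurableT _ (measurable_itv `]-oo, 1]).
by rewrite setTI; congr measurable; apply/seteqP; split => x; rewrite /= in_itv.
Qed.

Lemma measurable_extD (f : R * R -> R) :
  measurable_fun (OmegaD R) f -> measurable_fun setT (extD R f).
Proof.
move=> /(measurable_restrictT f measurable_OmegaD).
by apply: eq_measurable_fun => x _; rewrite /extD /patch.
Qed.

Lemma measurable_radon (f : R * R -> R) : measurable_fun (OmegaD R) f ->
  measurable_fun setT (fun q : R * R => radon R f q.1 q.2).
Proof.
move=> /measurable_extD mf.
have ms : measurable_fun setT (fun z : (R * R) * R => z.1.1) by exact: measurableT_comp.
have mt : measurable_fun setT (fun z : (R * R) * R => z.1.2) by exact: measurableT_comp.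
have mcos : measurable_fun setT (fun z : (R * R) * R => cos z.1.2).
  exact: measurableT_comp (continuous_measurable_fun (@continuous_cos R)) mt.
have msin : measurable_fun setT (fun z : (R * R) * R => sin z.1.2).
  exact: measurableT_comp (continuous_measurable_fun (@continuous_sin R)) mt.
have mrot : measurable_fun setT (fun z : (R * R) * R =>
    (z.1.1 * cos z.1.2 - z.2 * sin z.1.2, z.1.1 * sin z.1.2 + z.2 * cos z.1.2)).
  by apply: measurable_fun_pair; [apply: measurable_funB|apply: measurable_funD];
    apply: measurable_funM.
exact: measurable_fun_Rintegral_section mu _ (measurableT_comp mf mrot).
Qed.

Lemma measurable_Fop {w E : R -> R} {f : R * R -> R} :
  measurable_fun setT w -> measurable_fun setT E -> measurable_fun (OmegaD R) f ->
  measurable_fun setT (Fop R w E f).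
Proof.
move=> mw mE /measurable_radon mRf.
have mwE : measurable_fun setT (fun z : (R * R) * R =>
    w (z.2 - z.1.1) * E (radon R f z.2 z.1.2 / 2)).
  apply: measurable_funM.
    apply: measurableT_comp mw (measurable_funB measurable_snd _).
    exact: measurableT_comp.
  apply: measurableT_comp mE (measurable_funM _ (measurable_cst _)).
  by apply: measurableT_comp mRf (measurable_fun_pair _ _) => //; exact: measurableT_comp.
exact: measurable_fun_Rintegral_section mu _ mwE.
Qed.

Lemma normr_Fop_le (w E : R -> R) (f : R * R -> R) (M : R) (p : R * R) :
  mu.-integrable setT (EFin \o w) -> measurable_fun setT E ->
  measurable_fun (OmegaD R) f -> (forall x, `|E x| <= M) ->
  `|Fop R w E f p| <= M * \int[mu]_r `|w r|.
Proof.
move=> iw mE /measurable_radon mRf EM.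
have mRp : measurable_fun setT (fun r : R => radon R f r p.2).
  have mpair : measurable_fun setT (fun r : R => (r, p.2)) by exact: measurable_fun_pair.
  exact: measurableT_comp mRf mpair.
apply: normr_Rintegral_translate_mul_le => //.
exact: measurableT_comp mE (measurable_funM mRp (measurable_cst _)).
Qed.

Lemma OmegaSE : OmegaS R = `[-1, 1]%classic `*` `[0, 2 * pi[%classic.
Proof. by apply/seteqP; split => -[x y]; rewrite /OmegaS /= !in_itv. Qed.

Lemma measurable_OmegaS : measurable (OmegaS R).
Proof. by rewrite OmegaSE; apply: measurableX. Qed.

Lemma leb2_OmegaS_lty : (leb2 R (OmegaS R) < +oo)%E.
Proof.
have -> : leb2 R (OmegaS R) =
    (mu `[(-1)%R, 1%R]%classic * mu `[0%R, (2 * pi)%R[%classic)%E.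
  by rewrite OmegaSE /leb2 product_measure1E.
rewrite !lebesgue_measure_itv /=.
by case: ifP => _; case: ifP => _; rewrite ?mule0 ?mul0e -?EFinN -?EFinD -?EFinM ?ltry.
Qed.

End radon_operator.

Theorem proposition1 (R : realType) (E w : R -> R)
  (* E in C^2(R) *)
  (hE1 : forall x : R, derivable E x 1)
  (hE2 : forall x : R, derivable (derive1 E) x 1)
  (hE2c : continuous (derive1n 2 E))
  (* E(x) = exp(-x) for x >= 0 *)
  (hEexp : forall x : R, 0 <= x -> E x = expR (- x))
  (* |E|, |E'|, |E''| bounded on R *)
  (hEb0 : exists M : R, forall x, `|E x| <= M)
  (hEb1 : exists M : R, forall x, `|(derive1 E) x| <= M)
  (hEb2 : exists M : R, forall x, `|(derive1n 2 E) x| <= M)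
  (* w in L_1(R) *)
  (hw : (@lebesgue_measure R).-integrable setT (fun x => (w x)%:E))
  (* f in L_2(Omega_D) *)
  (f : R * R -> R)
  (hfm : measurable_fun (OmegaD R) f)
  (hf2 : (\int[leb2 R]_(x in OmegaD R) (`|f x| ^+ 2)%:E < +oo)%E) :
  (* F(f) in L_2(Omega_S) *)
  measurable_fun (OmegaS R) (Fop R w E f) /\
  (\int[leb2 R]_(x in OmegaS R) (`|Fop R w E f x| ^+ 2)%:E < +oo)%E.
Proof.
have mw : measurable_fun setT w by case/integrableP: hw => /measurable_EFinP.
have mE : measurable_fun setT E.
  apply: continuous_measurable_fun => x.
  exact/differentiable_continuous/derivable1_diffP/hE1.
have mF := measurable_Fop mw mE hfm.
have [M EM] := hEb0.
split; first exact: measurable_funS mF.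
apply: integral_sqr_normr_bounded_lty.
- exact: measurable_OmegaS.
- exact: leb2_OmegaS_lty.
- exact: measurable_funS mF.
- by move=> p _; exact: normr_Fop_le.
Qed.
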